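(* Let $f:2^{\mathcal{E}_x}\to\mathbb{R}_{\ge 0}$ be normalized, monotone and submodular, let $\Delta\ge1$ be the maximum vertex degree of $\mathcal{G}$, and consider $(\mathrm{P}_1)$ under the constraint TU$_b$ (i.e., maximize $f(\mathcal{E})$ over $\mathcal{E}\subseteq\mathcal{E}_x$ with $|\mathcal{E}|\le k$ and some vertex cover $\mathcal{V}$ of $\mathcal{E}$ with $|\mathcal{V}|\le b$), with optimal value $\mathrm{OPT}_1$. Then the algorithm Vertex-Greedy (described in the context) returns a feasible solution $\mathcal{E}_{\mathrm{grd}}$ of this problem with $f(\mathcal{E}_{\mathrm{grd}})\ge\alpha_v(b,k,\Delta)\cdot\mathrm{OPT}_1$, where $\alpha_v(b,k,\Delta)=1-\exp\big(-\min\{1,\lfloor k/\Delta\rfloor/b\}\big)$.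
   Context: $\mathcal{G}=(\mathcal{V}_x,\mathcal{E}_x)$ is a finite simple undirected graph; $b,k\ge1$ are integers. For $\mathcal{V}\subseteq\mathcal{V}_x$, $\mathsf{edges}(\mathcal{V})$ is the set of edges incident to at least one vertex of $\mathcal{V}$. A set function $h$ is normalized if $h(\varnothing)=0$, monotone if $h(A)\le h(B)$ for $A\subseteq B$, submodular if $h(A)+h(B)\ge h(A\cup B)+h(A\cap B)$. Vertex-Greedy: let $h(\mathcal{V})=f(\mathsf{edges}(\mathcal{V}))$. Start with $\mathcal{V}_{\mathrm{grd}}=\varnothing$ and repeat: pick $v^\star\in\arg\max_{v\in\mathcal{V}_x\setminus\mathcal{V}_{\mathrm{grd}}}h(\mathcal{V}_{\mathrm{grd}}\cup\{v\})$; if $|\mathcal{V}_{\mathrm{grd}}\cup\{v^\star\}|>b$ or $|\mathsf{edges}(\mathcal{V}_{\mathrm{grd}}\cup\{v^\star\})|>k$ (or no vertex remains), stop; otherwise set $\mathcal{V}_{\mathrm{grd}}\leftarrow\mathcal{V}_{\mathrm{grd}}\cup\{v^\star\}$. Return $\mathcal{V}_{\mathrm{grd}}$ and $\mathcal{E}_{\mathrm{grd}}=\mathsf{edges}(\mathcal{V}_{\mathrm{grd}})$. *)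

From Stdlib Require Import Reals.
From mathcomp Require Import all_boot.
Set Implicit Arguments. Unset Strict Implicit. Unset Printing Implicit Defensive.

Section Defs.
Variables (T : finType) (e : rel T).

Definition edges_x : {set {set T}} :=
  [set E : {set T} | [exists x, [exists y, e x y && (E == [set x; y])]]].

Definition edges_of (V : {set T}) : {set {set T}} :=
  [set E in edges_x | [exists v in V, v \in E]].

Definition covers (V : {set T}) (E : {set {set T}}) : Prop :=
  forall E0, E0 \in E -> exists2 v, v \in V & v \in E0.

Definition max_degree : nat := \max_(v : T) #|[set u | e v u]|.

Definition feasible (b k : nat) (E : {set {set T}}) : Prop :=
  E \subset edges_x /\ #|E| <= k /\ exists2 V : {set T}, #|V| <= b & covers V E.

Variables (f : {set {set T}} -> R) (b k : nat).

Definition h (V : {set T}) : R := f (edges_of V).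

Definition greedy_choice (cur : {set T}) (v : T) : Prop :=
  v \notin cur /\ forall u, u \notin cur -> Rle (h (cur :|: [set u])) (h (cur :|: [set v])).

(* Sets reachable by accepted greedy steps (any tie-breaking). *)
Inductive greedy_reach : {set T} -> Prop :=
| greedy_start : greedy_reach set0
| greedy_next cur v : greedy_reach cur -> greedy_choice cur v ->
    #|cur :|: [set v]| <= b -> #|edges_of (cur :|: [set v])| <= k ->
    greedy_reach (cur :|: [set v]).

Definition greedy_output (V : {set T}) : Prop :=
  greedy_reach V /\
  ((forall u, u \in V) \/
   exists v, greedy_choice V v /\
     (b < #|V :|: [set v]| \/ k < #|edges_of (V :|: [set v])|)).

End Defs.

Definition alpha_v (b k Delta : nat) : R :=
  Rminus 1 (exp (Ropp (Rmin 1 (Rdiv (INR (k %/ Delta)) (INR b))))).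

From Stdlib Require Import Reals Lra.
From mathcomp Require Import all_boot.
Set Implicit Arguments. Unset Strict Implicit.

(* The vertex objective h(V) = f(edges(V)) is monotone and submodular, and a
   feasible edge set E with vertex cover C, |C| <= b, satisfies
   f(E) <= h(C).  The classical greedy analysis gives
   h(C) - h(V_t) <= (1 - 1/b)^t h(C) after t accepted steps.  Greedy stops
   when all vertices are taken, or when one more vertex would exceed b
   vertices (so t >= b) or k edges; since t+1 vertices meet at most (t+1)Δ
   edges, the latter forces t >= floor(k/Δ).  Finally
   (1 - 1/b)^t <= exp(-t/b) <= exp(-min(1, floor(k/Δ)/b)). *)

Local Open Scope R_scope.

Section EdgesOf.
Variables (T : finType) (e : rel T).

Lemma edges_of_sub (V : {set T}) : edges_of e V \subset edges_x e.
Proof. by apply/subsetP=> E; rewrite inE => /andP[]. Qed.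

Lemma edges_ofS (A B : {set T}) : A \subset B -> edges_of e A \subset edges_of e B.
Proof.
move=> sAB; apply/subsetP=> E; rewrite !inE => /andP[-> /existsP[v /andP[vA vE]]].
by apply/existsP; exists v; rewrite (subsetP sAB).
Qed.

Lemma edges_ofU (A B : {set T}) : edges_of e (A :|: B) = edges_of e A :|: edges_of e B.
Proof.
apply/setP=> E; rewrite !inE -andb_orr; congr (_ && _).
apply/existsP/orP => [[v /andP[]]|].
  by rewrite inE => /orP[vA vE|vB vE]; [left|right]; apply/existsP; exists v; rewrite ?vA ?vB.
by case=> /existsP[v /andP[vX vE]]; exists v; rewrite inE vX ?orbT.
Qed.

Lemma edges_of0 : edges_of e set0 = set0.
Proof.
by apply/setP=> E; rewrite !inE; apply/negbTE/andP=> -[_ /existsP[v]]; rewrite inE.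
Qed.

Lemma covers_edges_of (V : {set T}) : covers V (edges_of e V).
Proof. by move=> E; rewrite inE => /andP[_ /existsP[v /andP[vV vE]]]; exists v. Qed.

Lemma covers_sub_edges_of (V : {set T}) (E : {set {set T}}) :
  E \subset edges_x e -> covers V E -> E \subset edges_of e V.
Proof.
move=> sE covE; apply/subsetP=> E0 E0E; rewrite inE (subsetP sE) //=.
by have [v vV vE0] := covE E0 E0E; apply/existsP; exists v; rewrite vV.
Qed.

Lemma edges_of_bigcup (V : {set T}) :
  edges_of e V = \bigcup_(v in V) edges_of e [set v].
Proof.
apply/setP=> E; apply/idP/bigcupP => [|[v vV]].
  rewrite inE => /andP[EE /existsP[v /andP[vV vE]]]; exists v => //.
  by rewrite inE EE; apply/existsP; exists v; rewrite inE eqxx.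
by apply/subsetP; apply: edges_ofS; rewrite sub1set.
Qed.

Hypothesis e_sym : symmetric e.

Lemma card_edges_of1 (v : T) : (#|edges_of e [set v]| <= max_degree e)%N.
Proof.
apply: leq_trans (leq_bigmax v).
apply: leq_trans (leq_imset_card (fun u => [set v; u]) [set u | e v u]).
apply: subset_leq_card; apply/subsetP=> E; rewrite inE => /andP[].
rewrite inE => /existsP[x /existsP[y /andP[exy /eqP ->]]] /existsP[w].
rewrite !inE => /andP[/eqP -> /orP[/eqP ->|/eqP ->]].
  by apply/imsetP; exists y; rewrite ?inE.
by apply/imsetP; exists x; rewrite ?inE 1?setUC // e_sym.
Qed.

Lemma card_edges_of (V : {set T}) : (#|edges_of e V| <= #|V| * max_degree e)%N.
Proof.
rewrite edges_of_bigcup -sum_nat_const.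
elim/big_ind2: _ => [|U1 n1 U2 n2 le1 le2|v _]; first by rewrite cards0.
  exact: leq_trans (leq_card_setU _ _) (leq_add le1 le2).
exact: card_edges_of1.
Qed.

End EdgesOf.

Section SubmodularGreedyStep.
Variables (T : finType) (g : {set T} -> R).
Hypothesis g_mono : forall A B : {set T}, A \subset B -> g A <= g B.
Hypothesis g_submod : forall A B : {set T}, g (A :|: B) + g (A :&: B) <= g A + g B.

Lemma submod_le_add_card_gain (V S : {set T}) (d : R) :
  (forall u, g (V :|: [set u]) - g V <= d) -> g (V :|: S) <= g V + INR #|S| * d.
Proof.
move=> gain_le; have [n] := ubnP #|S|; elim: n S => // n IH S.
have [->|[x xS]] := set_0Vmem S; first by rewrite setU0 cards0 /=; lra.
rewrite ltnS => cardS.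
have IHx := IH _ (leq_trans (proper_card (properD1 xS)) cardS).
have VUS : V :|: (x |: S :\ x) = (V :|: S :\ x) :|: (V :|: [set x]).
  by rewrite setUACA setUid [S :\ x :|: _]setUC.
have meet_ge : g V <= g ((V :|: S :\ x) :&: (V :|: [set x])).
  by apply: g_mono; rewrite subsetI !subsetUl.
have submod := g_submod (V :|: S :\ x) (V :|: [set x]); have gain_x := gain_le x.
by rewrite -{1}(setD1K xS) VUS (cardsD1 x) xS add1n S_INR; lra.
Qed.

(* Submodularity spreads the gap to any set [S] of at most [b] vertices over
   single-vertex gains, the largest of which the greedy step collects. *)
Lemma greedy_step_gap (b : nat) (S V : {set T}) (v : T) :
  (1 <= b)%N -> (#|S| <= b)%N ->
  (forall u, g (V :|: [set u]) <= g (V :|: [set v])) ->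
  g S - g (V :|: [set v]) <= (1 - / INR b) * (g S - g V).
Proof.
move=> b_gt0 cardS v_max.
set d := g (V :|: [set v]) - g V.
have b1 : 1 <= INR b by rewrite -INR_1; apply/le_INR/leP.
have d_ge0 : 0 <= d by have := g_mono (subsetUl V [set v]); rewrite /d; lra.
have gap_le : g S - g V <= INR b * d.
  have gain_le : forall u, g (V :|: [set u]) - g V <= d.
    by move=> u; have := v_max u; rewrite /d; lra.
  have := submod_le_add_card_gain S gain_le.
  have := g_mono (subsetUr V S).
  have : INR #|S| * d <= INR b * d by apply: Rmult_le_compat_r => //; apply/le_INR/leP.
  lra.
have -> : g S - g (V :|: [set v]) = g S - g V - d by rewrite /d; ring.
have : (g S - g V) * / INR b <= d.
  apply: (Rmult_le_reg_l (INR b)); first lra.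
  by rewrite -Rmult_assoc (Rmult_comm _ (g S - g V)) Rmult_assoc Rinv_r; lra.
nra.
Qed.

End SubmodularGreedyStep.

Lemma exp_le_exp (x y : R) : x <= y -> exp x <= exp y.
Proof. by case=> [/exp_increasing/Rlt_le|->] //; exact: Rle_refl. Qed.

Lemma pow_one_sub_inv_le_exp (B : R) (t : nat) :
  0 < B -> 0 <= 1 - / B -> (1 - / B) ^ t <= exp (- (INR t / B)).
Proof.
move=> B_gt0 r_ge0; elim: t => [|t IH].
  by rewrite /= /Rdiv Rmult_0_l Ropp_0 exp_0; exact: Rle_refl.
have -> : exp (- (INR t.+1 / B)) = exp (- / B) * exp (- (INR t / B)).
  by rewrite -exp_plus S_INR; f_equal; field; lra.
apply: Rmult_le_compat => //; first exact: pow_le.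
by have := exp_ineq1_le (- / B); lra.
Qed.

Section AlphaV.
Variables (b k D : nat).
Hypothesis b_gt0 : (1 <= b)%N.

Let B_ge1 : 1 <= INR b.
Proof. by rewrite -INR_1; apply/le_INR/leP. Qed.

Lemma one_sub_inv_INR_ge0 : 0 <= 1 - / INR b.
Proof.
have : / INR b <= 1 by rewrite -Rinv_1; apply: Rinv_le_contravar; lra.
lra.
Qed.

Lemma alpha_v_ge0 : 0 <= alpha_v b k D.
Proof.
have m_ge0 : 0 <= Rmin 1 (INR (k %/ D) / INR b).
  apply: Rmin_glb; first lra.
  by apply: Rle_mult_inv_pos; [exact: pos_INR | lra].
have := exp_le_exp (Ropp_le_contravar _ _ m_ge0); rewrite Ropp_0 exp_0 /alpha_v; lra.
Qed.

Lemma alpha_v_le1 : alpha_v b k D <= 1.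
Proof. by rewrite /alpha_v; have := exp_pos (- Rmin 1 (INR (k %/ D) / INR b)); lra. Qed.

Lemma alpha_v_le_one_sub_pow (t : nat) :
  (b <= t \/ k %/ D <= t)%N -> alpha_v b k D <= 1 - (1 - / INR b) ^ t.
Proof.
move=> t_ge.
have m_le : Rmin 1 (INR (k %/ D) / INR b) <= INR t / INR b.
  have B_gt0 : 0 < / INR b by apply: Rinv_0_lt_compat; lra.
  case: t_ge => /leP/le_INR t_ge.
    apply: Rle_trans (Rmin_l _ _) _.
    by rewrite -(Rinv_r (INR b)); [apply: Rmult_le_compat_r; lra | lra].
  by apply: Rle_trans (Rmin_r _ _) _; apply: Rmult_le_compat_r; lra.
rewrite /alpha_v.
have := pow_one_sub_inv_le_exp t (ltac:(lra) : 0 < INR b) one_sub_inv_INR_ge0.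
have := exp_le_exp (Ropp_le_contravar _ _ m_le); lra.
Qed.

End AlphaV.

Section VertexGreedy.
Variables (T : finType) (e : rel T) (f : {set {set T}} -> R) (b k : nat).
Hypothesis f_norm : f set0 = R0.
Hypothesis f_mono : forall A B : {set {set T}},
  B \subset edges_x e -> A \subset B -> f A <= f B.
Hypothesis f_submod : forall A B : {set {set T}}, A \subset edges_x e -> B \subset edges_x e ->
  f (A :|: B) + f (A :&: B) <= f A + f B.

Lemma h_mono (A B : {set T}) : A \subset B -> h e f A <= h e f B.
Proof. by move=> sAB; apply: f_mono; [exact: edges_of_sub | exact: edges_ofS]. Qed.

Lemma h_submod (A B : {set T}) : h e f (A :|: B) + h e f (A :&: B) <= h e f A + h e f B.
Proof.
rewrite /h edges_ofU.
have := f_submod (edges_of_sub e A) (edges_of_sub e B).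
have : f (edges_of e (A :&: B)) <= f (edges_of e A :&: edges_of e B).
  apply: f_mono; first exact: subset_trans (subsetIl _ _) (edges_of_sub e A).
  by rewrite subsetI !edges_ofS ?subsetIl ?subsetIr.
lra.
Qed.

Lemma greedy_choice_max (V : {set T}) (v : T) : greedy_choice e f V v ->
  forall u, h e f (V :|: [set u]) <= h e f (V :|: [set v]).
Proof.
move=> [_ v_max] u; have [uV|] := boolP (u \in V); last exact: v_max.
by rewrite (setUidPl _) ?sub1set //; exact: h_mono (subsetUl _ _).
Qed.

Lemma greedy_reach_feasible (V : {set T}) :
  greedy_reach e f b k V -> feasible e b k (edges_of e V).
Proof.
move=> reachV; split; first exact: edges_of_sub.
have [cardV cardE] : (#|V| <= b /\ #|edges_of e V| <= k)%N.
  by case: reachV => [|cur v _ _ cardV cardE]; rewrite ?edges_of0 ?cards0.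
by split=> //; exists V => //; exact: covers_edges_of.
Qed.

Hypothesis b_gt0 : (1 <= b)%N.

Lemma greedy_reach_gap (S V : {set T}) : (#|S| <= b)%N -> greedy_reach e f b k V ->
  h e f S - h e f V <= (1 - / INR b) ^ #|V| * h e f S.
Proof.
move=> cardS; elim=> [|W v _ IH choice_v _ _].
  by rewrite cards0 /h edges_of0 f_norm /=; lra.
have [vW _] := choice_v.
rewrite setUC cardsU1 vW add1n /= setUC.
have := greedy_step_gap h_mono h_submod b_gt0 cardS (greedy_choice_max choice_v).
have := Rmult_le_compat_l _ _ _ (one_sub_inv_INR_ge0 b_gt0) IH.
lra.
Qed.

Hypothesis e_sym : symmetric e.

Lemma greedy_stop_card (V : {set T}) (v : T) : v \notin V ->
  (b < #|V :|: [set v]| \/ k < #|edges_of e (V :|: [set v])|)%N ->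
  (b <= #|V| \/ k %/ max_degree e <= #|V|)%N.
Proof.
move=> vV; rewrite setUC cardsU1 vV add1n ltnS.
case=> [|k_lt]; [by left | right].
have := leq_trans k_lt (card_edges_of e_sym _); rewrite cardsU1 vV add1n => k_lt'.
have D_gt0 : (0 < max_degree e)%N by move: k_lt'; case: (max_degree e); rewrite ?muln0.
by rewrite -ltnS ltn_divLR.
Qed.

Lemma greedy_output_gap (S V : {set T}) : (#|S| <= b)%N -> greedy_output e f b k V ->
  exists2 p, alpha_v b k (max_degree e) <= 1 - p & h e f S - h e f V <= p * h e f S.
Proof.
move=> cardS [reachV [V_full | [v [choice_v stop]]]].
  exists 0; first by have := alpha_v_le1 b k (max_degree e); lra.
  have : S \subset V by apply/subsetP=> u _; exact: V_full.
  by move/h_mono; lra.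
exists ((1 - / INR b) ^ #|V|); last exact: greedy_reach_gap.
apply: alpha_v_le_one_sub_pow => //.
by case: choice_v => vV _; exact: greedy_stop_card vV stop.
Qed.

End VertexGreedy.

Local Close Scope R_scope.

Theorem lemma4 (T : finType) (e : rel T)
  (e_sym : symmetric e) (e_irr : irreflexive e)
  (b k : nat) (hb : 1 <= b) (hk : 1 <= k)
  (f : {set {set T}} -> R)
  (f_nonneg : forall A : {set {set T}}, A \subset edges_x e -> Rle 0 (f A))
  (f_norm : f set0 = R0)
  (f_mono : forall A B : {set {set T}}, B \subset edges_x e -> A \subset B -> Rle (f A) (f B))
  (f_submod : forall A B : {set {set T}}, A \subset edges_x e -> B \subset edges_x e ->
      Rle (Rplus (f (A :|: B)) (f (A :&: B))) (Rplus (f A) (f B)))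
  (hDelta : 1 <= max_degree e)
  (Vgrd : {set T}) (hgrd : greedy_output e f b k Vgrd) :
  feasible e b k (edges_of e Vgrd) /\
  forall E, feasible e b k E ->
    Rle (Rmult (alpha_v b k (max_degree e)) (f E)) (f (edges_of e Vgrd)).
Proof.
split; first exact: greedy_reach_feasible hgrd.1.
move=> E [sE [_ [S cardS covS]]].
have fE_le : Rle (f E) (h e f S).
  by apply: f_mono; [exact: edges_of_sub | exact: covers_sub_edges_of].
have [p alpha_le gap] := greedy_output_gap f_norm f_mono f_submod hb e_sym cardS hgrd.
have := f_nonneg _ sE; have := alpha_v_ge0 k (max_degree e) hb.
rewrite /h in fE_le gap *; nra.
Qed.
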